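(* Let $f:H\to\mathbb{R}\cup\{+\infty\}$ be proper lower semicontinuous with the K\L{} property at $x^*$ with desingularizing function $\varphi:[0,\eta[\to[0,\infty[$, the K\L{} inequality holding on $\Gamma_\eta(x^*,\delta)$. Let $(x^k)$ satisfy $\mathbf{H}_1$ and $\mathbf{H}_2$, and fix $k\ge1$. If $x^k$ and $x^{k+1}$ belong to $\underline{\Gamma}_\eta(x^*,\delta)$, then $$2\|x^{k+1}-x^k\|\le\|x^k-x^{k-1}\|+\frac{1}{a_kb_k}\big[\varphi(f(x^k)-f(x^* ))-\varphi(f(x^{k+1})-f(x^* ))\big]+\varepsilon_k.$$
   Context: Lazy slope $\|\partial f(x)\|_-=\inf_{p\in\partial f(x)}\|p\|$ ($+\infty$ if empty), $\partial f$ the limiting Fréchet subdifferential. Desingularizing function: continuous concave $\varphi:[0,\eta[\to[0,\infty[$, $\varphi(0)=0$, $C^1$ on $]0,\eta[$ with $\varphi'>0$. K\L{} inequality on $\Gamma_\eta(x^*,\delta)=\{x:\|x-x^*\|<\delta,\ f(x^* )<f(x)<f(x^* )+\eta\}$: $\varphi'(f(x)-f(x^* ))\|\partial f(x)\|_-\ge1$. $\underline{\Gamma}_\eta(x^*,\delta)=\{x:\|x-x^*\|<\delta,\ f(x^* )\le f(x)<f(x^* )+\eta\}$. $\mathbf{H}_1$: for each $k$, $f(x^{k+1})+a_k\|x^{k+1}-x^k\|^2\le f(x^k)$, $a_k>0$. $\mathbf{H}_2$: for each $k$, $b_{k+1}\|\partial f(x^{k+1})\|_-\le\|x^{k+1}-x^k\|+\varepsilon_{k+1}$,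 $b_{k+1}>0$, $\varepsilon_{k+1}\ge0$. *)

From Stdlib Require Import Reals Lra ClassicalEpsilon.
Open Scope R_scope.

Inductive ERbar := Fin (r : R) | PInf.

Definition Elt (r : R) (e : ERbar) : Prop :=
  match e with Fin s => r < s | PInf => True end.

Definition Ele (e1 e2 : ERbar) : Prop :=
  match e1, e2 with
  | _, PInf => True
  | PInf, Fin _ => False
  | Fin r, Fin s => r <= s
  end.

Definition Eplus (e1 e2 : ERbar) : ERbar :=
  match e1, e2 with Fin r, Fin s => Fin (r + s) | _, _ => PInf end.

(** product c * e for a scalar c > 0 (so c * (+∞) = +∞) *)
Definition Emul_pos (c : R) (e : ERbar) : ERbar :=
  match e with Fin s => Fin (c * s) | PInf => PInf end.

Record Hilbert := {
  Hc :> Type;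
  hzero : Hc;
  hplus : Hc -> Hc -> Hc;
  hopp : Hc -> Hc;
  hscal : R -> Hc -> Hc;
  hinner : Hc -> Hc -> R;
  hplus_assoc : forall x y z, hplus x (hplus y z) = hplus (hplus x y) z;
  hplus_comm : forall x y, hplus x y = hplus y x;
  hplus_zero : forall x, hplus hzero x = x;
  hplus_opp : forall x, hplus (hopp x) x = hzero;
  hscal_assoc : forall a b x, hscal a (hscal b x) = hscal (a * b) x;
  hscal_one : forall x, hscal 1 x = x;
  hscal_distr_l : forall a x y, hscal a (hplus x y) = hplus (hscal a x) (hscal a y);
  hscal_distr_r : forall a b x, hscal (a + b) x = hplus (hscal a x) (hscal b x);
  hinner_sym : forall x y, hinner x y = hinner y x;
  hinner_plus : forall x y z, hinner (hplus x y) z = hinner x z + hinner y z;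
  hinner_scal : forall a x y, hinner (hscal a x) y = a * hinner x y;
  hinner_pos : forall x, 0 <= hinner x x;
  hinner_def : forall x, hinner x x = 0 -> x = hzero;
  hcomplete : forall u : nat -> Hc,
    (forall e, 0 < e -> exists N, forall n m, (N <= n)%nat -> (N <= m)%nat ->
        sqrt (hinner (hplus (u n) (hopp (u m))) (hplus (u n) (hopp (u m)))) < e) ->
    exists l, forall e, 0 < e -> exists N, forall n, (N <= n)%nat ->
        sqrt (hinner (hplus (u n) (hopp l)) (hplus (u n) (hopp l))) < e
}.

Arguments hplus {h}. Arguments hopp {h}. Arguments hinner {h}.

Definition hminus {H : Hilbert} (x y : H) : H := hplus x (hopp y).
Definition hnorm {H : Hilbert} (x : H) : R := sqrt (hinner x x).

Definition seq_cv {H : Hilbert} (u : nat -> H) (l : H) : Prop :=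
  forall e, 0 < e -> exists N, forall n, (N <= n)%nat -> hnorm (hminus (u n) l) < e.

Definition proper_fun {H : Hilbert} (f : H -> ERbar) : Prop :=
  exists x, f x <> PInf.

Definition lsc {H : Hilbert} (f : H -> ERbar) : Prop :=
  forall x r, Elt r (f x) ->
    exists d, 0 < d /\ forall y, hnorm (hminus y x) < d -> Elt r (f y).

Definition frechet_subdiff {H : Hilbert} (f : H -> ERbar) (x p : H) : Prop :=
  exists fx, f x = Fin fx /\
    forall e, 0 < e -> exists d, 0 < d /\
      forall y, hnorm (hminus y x) < d ->
        Ele (Fin (fx + hinner p (hminus y x) - e * hnorm (hminus y x))) (f y).

Definition limiting_subdiff {H : Hilbert} (f : H -> ERbar) (x p : H) : Prop :=
  exists fx, f x = Fin fx /\
  exists (xs ps : nat -> H),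
    seq_cv xs x /\ seq_cv ps p /\
    (forall n, frechet_subdiff f (xs n) (ps n)) /\
    (forall e, 0 < e -> exists N, forall n, (N <= n)%nat ->
        exists v, f (xs n) = Fin v /\ Rabs (v - fx) < e).

(** lazy slope ||∂f(x)||_- = inf_{p ∈ ∂f(x)} ||p||, +∞ if ∂f(x) = ∅ *)
Definition lazy_slope {H : Hilbert} (f : H -> ERbar) (x : H) : ERbar.
Proof.
  destruct (excluded_middle_informative (exists p, limiting_subdiff f x p)) as [Hne|_].
  - set (E := fun r => exists p, limiting_subdiff f x p /\ r = - hnorm p).
    assert (Hb : bound E).
    { exists 0. intros r [p [_ ->]]. unfold hnorm.
      pose proof (sqrt_pos (hinner p p)). lra. }
    assert (Hex : exists r, E r).
    { destruct Hne as [p Hp]. exists (- hnorm p). exists p. split; auto. }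
    destruct (completeness E Hb Hex) as [m _].
    exact (Fin (- m)).
  - exact PInf.
Defined.

Definition in_co (eta : ERbar) (s : R) : Prop := 0 <= s /\ Elt s eta.
Definition in_oo (eta : ERbar) (s : R) : Prop := 0 < s /\ Elt s eta.

Definition desingularizing (eta : ERbar) (phi dphi : R -> R) : Prop :=
  phi 0 = 0 /\
  (forall s, in_co eta s -> 0 <= phi s) /\
  (forall s, in_co eta s -> forall e, 0 < e -> exists d, 0 < d /\
      forall t, in_co eta t -> Rabs (t - s) < d -> Rabs (phi t - phi s) < e) /\
  (forall s t l, in_co eta s -> in_co eta t -> 0 <= l <= 1 ->
      l * phi s + (1 - l) * phi t <= phi (l * s + (1 - l) * t)) /\
  (forall s, in_oo eta s -> derivable_pt_lim phi s (dphi s)) /\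
  (forall s, in_oo eta s -> continuity_pt dphi s) /\
  (forall s, in_oo eta s -> 0 < dphi s).

(** x ∈ Γ_η(xstar,δ), where fs = f(xstar) *)
Definition in_Gamma {H : Hilbert} (f : H -> ERbar) (xstar : H) (fs : R)
  (eta : ERbar) (delta : R) (x : H) : Prop :=
  hnorm (hminus x xstar) < delta /\
  exists v, f x = Fin v /\ fs < v /\ Elt (v - fs) eta.

Definition in_Gamma_le {H : Hilbert} (f : H -> ERbar) (xstar : H) (fs : R)
  (eta : ERbar) (delta : R) (x : H) : Prop :=
  hnorm (hminus x xstar) < delta /\
  exists v, f x = Fin v /\ fs <= v /\ Elt (v - fs) eta.

Definition KL_on {H : Hilbert} (f : H -> ERbar) (xstar : H) (fs : R)
  (eta : ERbar) (delta : R) (dphi : R -> R) : Prop :=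
  forall x v, in_Gamma f xstar fs eta delta x -> f x = Fin v ->
    Ele (Fin 1) (Emul_pos (dphi (v - fs)) (lazy_slope f x)).

(* At a point x^k with f(x^k) > f(x⋆), sufficient decrease, concavity of φ
   and the K\L inequality combine as
     a_k ‖x^{k+1} - x^k‖² ≤ f(x^k) - f(x^{k+1})
                          ≤ [φ(f(x^k) - f(x⋆)) - φ(f(x^{k+1}) - f(x⋆))] / φ'(f(x^k) - f(x⋆))
                          ≤ Δφ · ‖∂f(x^k)‖_-
                          ≤ Δφ · (‖x^k - x^{k-1}‖ + ε_k) / b_k,
   where Δφ is the bracket in the second line and the third step is the K\L
   inequality; then 2√(uv) ≤ u + v turns this into the claim.  If f(x^k) = f(x⋆),
   sufficient decrease forces x^{k+1} = x^k and the claim is trivial. *)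
From Stdlib Require Import Reals Lia Psatz.
Open Scope R_scope.

Lemma hnorm_ge0 {H : Hilbert} (x : H) : 0 <= hnorm x.
Proof. apply sqrt_pos. Qed.

Lemma two_mul_le_add_of_sqr_le_mul (r u v : R) :
  0 <= u -> 0 <= v -> r ^ 2 <= u * v -> 2 * r <= u + v.
Proof.
  intros Hu Hv Hr.
  destruct (Rle_dec (2 * r) (u + v)) as [Hle|Hgt]; [exact Hle|].
  pose proof (pow2_ge_0 (u - v)). nra.
Qed.

Lemma concave_le_tangent (D : R -> Prop) (phi : R -> R) (s t l : R) :
  (forall s t l, D s -> D t -> 0 <= l <= 1 ->
     l * phi s + (1 - l) * phi t <= phi (l * s + (1 - l) * t)) ->
  D s -> D t -> derivable_pt_lim phi s l -> phi t <= phi s + l * (t - s).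
Proof.
  intros Hconc Hs Ht Hder.
  destruct (Req_dec t s) as [->|Hts]; [lra|].
  destruct (Rle_dec (phi t) (phi s + l * (t - s))) as [Hle|Hgt]; [exact Hle|].
  exfalso.
  set (gap := phi t - phi s - l * (t - s)).
  assert (Hgap : 0 < gap) by (unfold gap; lra).
  assert (Hts0 : 0 < Rabs (t - s)) by (apply Rabs_pos_lt; lra).
  destruct (Hder (gap / Rabs (t - s))) as [[del Hdel] Hq].
  { apply Rdiv_lt_0_compat; lra. }
  (* At s + lam (t - s), with lam small, the derivative estimate contradicts concavity. *)
  set (lam := Rmin 1 (del / (2 * Rabs (t - s)))).
  assert (Hlam0 : 0 < lam).
  { apply Rmin_pos; [lra|]. apply Rdiv_lt_0_compat; lra. }
  assert (Hlam1 : lam <= 1) by apply Rmin_l.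
  assert (Hlam_del : lam * Rabs (t - s) <= del / 2).
  { replace (del / 2) with (del / (2 * Rabs (t - s)) * Rabs (t - s)) by (field; lra).
    apply Rmult_le_compat_r; [lra|apply Rmin_r]. }
  set (h := lam * (t - s)).
  assert (Habs_h : Rabs h = lam * Rabs (t - s)).
  { unfold h. rewrite Rabs_mult, (Rabs_right lam); lra. }
  assert (Hh0 : h <> 0) by (intro E; rewrite E, Rabs_R0 in Habs_h; nra).
  assert (Hh_del : Rabs h < del) by lra.
  specialize (Hq h Hh0 Hh_del).
  assert (Hslope : Rabs (phi (s + h) - phi s - l * h) < lam * gap).
  { replace (phi (s + h) - phi s - l * h)
      with (h * ((phi (s + h) - phi s) / h - l)) by (field; exact Hh0).
    rewrite Rabs_mult, Habs_h.
    replace (lam * gap) with (lam * Rabs (t - s) * (gap / Rabs (t - s))) by (field; lra).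
    apply Rmult_lt_compat_l; [nra|exact Hq]. }
  assert (Hchord := Hconc t s lam Ht Hs (conj (Rlt_le _ _ Hlam0) Hlam1)).
  replace (lam * t + (1 - lam) * s) with (s + h) in Hchord by (unfold h; ring).
  pose proof (Rle_abs (phi (s + h) - phi s - l * h)).
  unfold gap, h in *. nra.
Qed.

Lemma desingularizing_le_tangent (eta : ERbar) (phi dphi : R -> R) (s t : R) :
  desingularizing eta phi dphi -> in_oo eta s -> in_co eta t ->
  dphi s * (s - t) <= phi s - phi t.
Proof.
  intros (_ & _ & _ & Hconc & Hder & _) Hs Ht.
  enough (phi t <= phi s + dphi s * (t - s)) by lra.
  apply (concave_le_tangent (in_co eta) phi s t (dphi s) Hconc); [|exact Ht|exact (Hder s Hs)].
  destruct Hs as [Hs0 Hs]. split; [lra|exact Hs].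
Qed.

Lemma KL_lazy_slope_bound {H : Hilbert} (f : H -> ERbar) (xstar : H) (fs : R)
  (eta : ERbar) (delta : R) (dphi : R -> R) (x : H) (v b c : R) :
  KL_on f xstar fs eta delta dphi -> in_Gamma f xstar fs eta delta x ->
  f x = Fin v -> 0 <= dphi (v - fs) -> 0 <= b ->
  Ele (Emul_pos b (lazy_slope f x)) (Fin c) -> b <= dphi (v - fs) * c.
Proof.
  intros HKL Hx Hv Hdphi Hb Hslope.
  pose proof (HKL x v Hx Hv) as HKLx.
  destruct (lazy_slope f x) as [sl|]; simpl in HKLx, Hslope; [|contradiction].
  nra.
Qed.

Lemma KL_step_estimate {H : Hilbert} (f : H -> ERbar) (xstar : H) (fs : R)
  (eta : ERbar) (delta : R) (phi dphi : R -> R) (x : H) (v v1 r a b c : R) :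
  desingularizing eta phi dphi -> KL_on f xstar fs eta delta dphi ->
  in_Gamma f xstar fs eta delta x -> f x = Fin v -> in_co eta (v1 - fs) ->
  0 < a -> 0 < b -> 0 <= c ->
  a * r ^ 2 <= v - v1 ->
  Ele (Emul_pos b (lazy_slope f x)) (Fin c) ->
  2 * r <= c + / (a * b) * (phi (v - fs) - phi (v1 - fs)).
Proof.
  intros Hdes HKL Hx Hv Hv1 Ha Hb Hc Hdecr Hslope.
  assert (Hoo : in_oo eta (v - fs)).
  { destruct Hx as (_ & w & Hw & Hfs & Heta). rewrite Hv in Hw.
    injection Hw as <-. split; [lra|exact Heta]. }
  assert (Hdphi : 0 < dphi (v - fs)) by (apply Hdes; exact Hoo).
  set (Dphi := phi (v - fs) - phi (v1 - fs)).
  assert (Htangent : dphi (v - fs) * (v - v1) <= Dphi).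
  { replace (v - v1) with ((v - fs) - (v1 - fs)) by ring.
    exact (desingularizing_le_tangent eta phi dphi _ _ Hdes Hoo Hv1). }
  assert (Hb_le := KL_lazy_slope_bound f xstar fs eta delta dphi x v b c
                     HKL Hx Hv (Rlt_le _ _ Hdphi) (Rlt_le _ _ Hb) Hslope).
  assert (Hab : 0 < a * b) by nra.
  assert (Hr2 : 0 <= a * r ^ 2) by (pose proof (pow2_ge_0 r); nra).
  assert (HDphi : 0 <= Dphi) by nra.
  assert (Hprod : a * b * r ^ 2 <= Dphi * c).
  { assert (a * r ^ 2 * b <= a * r ^ 2 * (dphi (v - fs) * c)) by nra.
    assert (dphi (v - fs) * (v - v1) * c <= Dphi * c) by nra.
    nra. }
  rewrite Rplus_comm.
  apply two_mul_le_add_of_sqr_le_mul; [|exact Hc|].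
  - apply Rmult_le_pos; [apply Rlt_le, Rinv_0_lt_compat|]; assumption.
  - replace (/ (a * b) * Dphi * c) with (/ (a * b) * (Dphi * c)) by ring.
    apply (Rmult_le_reg_l (a * b)); [exact Hab|].
    rewrite <- Rmult_assoc, Rinv_r, Rmult_1_l by lra. exact Hprod.
Qed.

Lemma in_Gamma_le_value {H : Hilbert} (f : H -> ERbar) (xstar : H) (fs : R)
  (eta : ERbar) (delta : R) (x : H) (v : R) :
  in_Gamma_le f xstar fs eta delta x -> f x = Fin v -> in_co eta (v - fs).
Proof.
  intros (_ & w & Hw & Hfs & Heta) Hv. rewrite Hv in Hw. injection Hw as <-.
  split; [lra|exact Heta].
Qed.

Lemma in_Gamma_of_le {H : Hilbert} (f : H -> ERbar) (xstar : H) (fs : R)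
  (eta : ERbar) (delta : R) (x : H) (v : R) :
  in_Gamma_le f xstar fs eta delta x -> f x = Fin v -> v <> fs ->
  in_Gamma f xstar fs eta delta x.
Proof.
  intros (Hdist & w & Hw & Hfs & Heta) Hv Hvfs. rewrite Hv in Hw. injection Hw as <-.
  split; [exact Hdist|]. exists v. split; [exact Hv|split; [lra|exact Heta]].
Qed.

Lemma sufficient_decrease_stalls (a r v v1 : R) :
  0 < a -> v1 + a * r ^ 2 <= v -> v <= v1 -> r = 0 /\ v1 = v.
Proof.
  intros Ha Hdecr Hv.
  assert (Hr2 : 0 <= r ^ 2) by apply pow2_ge_0.
  assert (Har2 : a * r ^ 2 = 0) by nra.
  apply Rmult_integral in Har2 as [|Hr2']; [lra|].
  split; nra.
Qed.

Theorem mainTheorem7 (H : Hilbert) (f : H -> ERbar) (xstar : H) (fs : R)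
  (eta : ERbar) (delta : R) (phi dphi : R -> R)
  (x : nat -> H) (a b eps : nat -> R) (k : nat) :
  proper_fun f -> lsc f ->
  f xstar = Fin fs ->
  Elt 0 eta -> 0 < delta ->
  desingularizing eta phi dphi ->
  KL_on f xstar fs eta delta dphi ->
  (* H1 *)
  (forall n, 0 < a n /\
     Ele (Eplus (f (x (S n))) (Fin (a n * (hnorm (hminus (x (S n)) (x n)))^2)))
         (f (x n))) ->
  (* H2 *)
  (forall n, 0 < b (S n) /\ 0 <= eps (S n) /\
     Ele (Emul_pos (b (S n)) (lazy_slope f (x (S n))))
         (Fin (hnorm (hminus (x (S n)) (x n)) + eps (S n)))) ->
  (1 <= k)%nat ->
  in_Gamma_le f xstar fs eta delta (x k) ->
  in_Gamma_le f xstar fs eta delta (x (S k)) ->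
  forall vk vk1, f (x k) = Fin vk -> f (x (S k)) = Fin vk1 ->
  2 * hnorm (hminus (x (S k)) (x k)) <=
    hnorm (hminus (x k) (x (pred k))) +
    / (a k * b k) * (phi (vk - fs) - phi (vk1 - fs)) + eps k.
Proof.
  intros _ _ _ _ _ Hdes HKL H1 H2 Hk Gk Gk1 vk vk1 Hvk Hvk1.
  destruct k as [|k]; [lia|]. simpl pred.
  destruct (H1 (S k)) as [Ha Hdecr]. rewrite Hvk, Hvk1 in Hdecr. simpl in Hdecr.
  destruct (H2 k) as (Hb & Heps & Hslope).
  pose proof (in_Gamma_le_value f xstar fs eta delta _ vk1 Gk1 Hvk1) as Hvk1_co.
  pose proof (hnorm_ge0 (hminus (x (S k)) (x k))).
  destruct (Req_dec vk fs) as [->|Hvk_fs].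
  - assert (Hfs1 : fs <= vk1) by (destruct Hvk1_co; lra).
    destruct (sufficient_decrease_stalls _ _ _ _ Ha Hdecr Hfs1) as [-> ->].
    rewrite Rminus_diag, Rmult_0_r. lra.
  - assert (Hstep := KL_step_estimate f xstar fs eta delta phi dphi _ vk vk1
                       (hnorm (hminus (x (S (S k))) (x (S k)))) (a (S k)) (b (S k))
                       (hnorm (hminus (x (S k)) (x k)) + eps (S k))
                       Hdes HKL (in_Gamma_of_le f xstar fs eta delta _ vk Gk Hvk Hvk_fs)
                       Hvk Hvk1_co Ha Hb ltac:(lra) ltac:(lra) Hslope).
    lra.
Qed.
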